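(* Let $P$ be a finite sequence of nonnegative integers. Then $P$ is mirror bigraphic if and only if the pair $(P,P)$ is bigraphic.
   Context: For sequences $P,Q$ of nonnegative integers, the pair $(P,Q)$ is bigraphic if there is a bipartite graph $G=(V_1\cup V_2,E)$ (with stable sets $V_1,V_2$) whose vertices in $V_1$ have degrees equal to the elements of $P$ and whose vertices in $V_2$ have degrees equal to the elements of $Q$; such $G$ realizes $(P,Q)$. A bipartite graph $G=(V_1\cup V_2,E)$ is mirror if there is a bijection $\varphi:V_1\to V_2$ with $u\varphi(v)\in E \iff \varphi(u)v\in E$ for all $u,v\in V_1$. A sequence $P$ is mirror bigraphic if $(P,P)$ is bigraphic and some mirror bipartite graph realizes $(P,P)$. *)

From mathcomp Require Import all_boot.
Set Implicit Arguments. Unset Strict Implicit. Unset Printing Implicit Defensive.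

(* A bipartite graph with stable sets V1, V2 is given by its edge relation
   E : V1 -> V2 -> bool (edges only go between V1 and V2). *)

Definition deg1 (V1 V2 : finType) (E : V1 -> V2 -> bool) (u : V1) : nat :=
  #|[pred w : V2 | E u w]|.
Definition deg2 (V1 V2 : finType) (E : V1 -> V2 -> bool) (w : V2) : nat :=
  #|[pred u : V1 | E u w]|.

Definition realizes (V1 V2 : finType) (E : V1 -> V2 -> bool)
  (P Q : seq nat) : Prop :=
  perm_eq [seq deg1 E u | u <- enum V1] P /\
  perm_eq [seq deg2 E w | w <- enum V2] Q.

Definition bigraphic (P Q : seq nat) : Prop :=
  exists (V1 V2 : finType) (E : V1 -> V2 -> bool), realizes E P Q.

Definition mirror (V1 V2 : finType) (E : V1 -> V2 -> bool) : Prop :=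
  exists phi : V1 -> V2, bijective phi /\
    forall u v : V1, E u (phi v) = E v (phi u).

Definition mirror_bigraphic (P : seq nat) : Prop :=
  bigraphic P P /\
  exists (V1 V2 : finType) (E : V1 -> V2 -> bool), mirror E /\ realizes E P P.

From mathcomp Require Import all_boot.
Set Implicit Arguments. Unset Strict Implicit. Unset Printing Implicit Defensive.

(* Transporting a realization of (P,P) along a degree-preserving bijection
   V1 -> V2 gives a 0/1 matrix A on V1 whose i-th row sum and i-th column sum
   are both the i-th degree; a mirror realization is a symmetric such matrix.
   A can be symmetrized without changing any margin.  If row n and column n
   differ, there are i with A n i > A i n and j with A j n > A n j; if column j
   has at least as many ones as column i, some row m has A m j > A m i, and
   flipping the 2x2 submatrix on rows n, m and columns i, j keeps all margins
   while removing the two disagreements at i and j (otherwise transpose).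
   Once row n equals column n, delete n and recurse. *)

Section Switching.
Variable T : finType.
Implicit Types (X : {set T}) (A B : T -> T -> bool).

Definition row_sum X A i := \sum_(j in X) (A i j : nat).
Definition col_sum X A j := \sum_(i in X) (A i j : nat).
Definition asym X A n := \sum_(y in X) (A n y != A y n : nat).

Definition transpose A x y := A y x.

Definition same_margins X A B :=
  row_sum X A =1 row_sum X B /\ col_sum X A =1 col_sum X B.

Definition switch A a b c d x y :=
  if [|| x == a | x == b] && [|| y == c | y == d] then ~~ A x y else A x y.

Lemma same_margins_trans X A B C :
  same_margins X A B -> same_margins X B C -> same_margins X A C.
Proof. by move=> [rAB cAB] [rBC cBC]; split=> x; rewrite ?rAB ?cAB. Qed.

Lemma same_margins_transpose X A B :
  same_margins X A B -> same_margins X (transpose A) (transpose B).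
Proof. by move=> [rAB cAB]; split; [exact: cAB | exact: rAB]. Qed.

Lemma asym_transpose X A n : asym X (transpose A) n = asym X A n.
Proof. by apply: eq_bigr => y _; rewrite /transpose eq_sym. Qed.

Lemma transpose_switch A a b c d :
  transpose (switch A a b c d) =2 switch (transpose A) c d a b.
Proof. by move=> x y; rewrite /transpose /switch andbC. Qed.

Lemma sum_setD2 X (F : T -> nat) c d : c \in X -> d \in X -> c != d ->
  \sum_(y in X) F y = F c + F d + \sum_(y in X :\ c :\ d) F y.
Proof.
move=> cX dX cd; rewrite (big_setD1 c cX) (big_setD1 d) /= ?addnA //.
by rewrite in_setD1 eq_sym cd.
Qed.

Lemma exists_sum_le X (p q : pred T) y0 : y0 \in X -> p y0 -> ~~ q y0 ->
  \sum_(y in X) (p y : nat) <= \sum_(y in X) (q y : nat) ->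
  exists2 y, y \in X & q y && ~~ p y.
Proof.
move=> y0X py0 qy0 le_pq; apply/exists_inP; apply: contraLR le_pq.
move=> /exists_inP q_p; rewrite -ltnNge (big_setD1 y0 y0X).
rewrite [X in _ < X](big_setD1 y0 y0X) py0 (negbTE qy0) ltnS.
apply: leq_sum => y /setD1P [_ yX]; case: (boolP (q y)) => // qy.
by case: (boolP (p y)) => // py; case: q_p; exists y; rewrite ?qy.
Qed.

Lemma add_negb_neq (p q : bool) : p != q -> (~~ p : nat) + ~~ q = p + q.
Proof. by case: p; case: q. Qed.

Section SwitchMargins.
Variables (X : {set T}) (A : T -> T -> bool) (a b c d : T).
Hypotheses (cX : c \in X) (dX : d \in X).
Hypotheses (Aac : A a c) (Aad : ~~ A a d) (Abc : ~~ A b c) (Abd : A b d).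

Lemma row_sum_switch : row_sum X A =1 row_sum X (switch A a b c d).
Proof.
have cd : c != d by apply: contraNneq Aad => <-.
move=> x; case: (boolP [|| x == a | x == b]) => xab; last first.
  by apply: eq_bigr => y _; rewrite /switch (negbTE xab).
rewrite /row_sum !(sum_setD2 _ cX dX cd); congr (_ + _); last first.
  apply: eq_bigr => y /setD1P [yd /setD1P [yc _]].
  by rewrite /switch (negbTE yc) (negbTE yd) andbF.
rewrite /switch xab !eqxx orbT /= add_negb_neq //.
by case/orP: xab => /eqP ->; rewrite ?Aac ?(negbTE Aad) ?(negbTE Abc) ?Abd.
Qed.

End SwitchMargins.

Lemma same_margins_switch X A a b c d :
  a \in X -> b \in X -> c \in X -> d \in X ->
  A a c -> ~~ A a d -> ~~ A b c -> A b d ->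
  same_margins X A (switch A a b c d).
Proof.
move=> aX bX cX dX Aac Aad Abc Abd; split; first exact: row_sum_switch.
move=> x; rewrite -[col_sum _ _ x]/(row_sum X (transpose A) x).
rewrite (row_sum_switch (a := c) (b := d) aX bX) //.
by apply: eq_bigr => y _; rewrite -transpose_switch.
Qed.

Lemma switch_at_row X A n i j : n \in X -> i \in X -> j \in X ->
  A n i -> ~~ A i n -> ~~ A n j -> A j n -> col_sum X A i <= col_sum X A j ->
  exists2 B, same_margins X A B & asym X B n < asym X A n.
Proof.
move=> nX iX jX Ani Ain Anj Ajn le_ij.
have [m mX /andP [Amj Ami]] :=
  exists_sum_le (p := A^~ i) (q := A^~ j) nX Ani Anj le_ij.
have ni : n != i by case: eqP Ani Ain => // -> ->.
have nj : n != j by case: eqP Ajn Anj => // -> ->.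
have ij : i != j by case: eqP Ani Anj => // -> ->.
exists (switch A n m i j).
  exact: same_margins_switch nX mX iX jX Ani Anj Ami Amj.
rewrite /asym !(sum_setD2 _ iX jX ij).
have -> : \sum_(y in X :\ i :\ j) (switch A n m i j n y != switch A n m i j y n : nat)
        = \sum_(y in X :\ i :\ j) (A n y != A y n : nat).
  apply: eq_bigr => y /setD1P [yj /setD1P [yi _]].
  by rewrite /switch (negbTE yi) (negbTE yj) (negbTE ni) (negbTE nj) !andbF.
rewrite ltn_add2r /switch !eqxx (negbTE ni) (negbTE nj) !andbF /= orbT.
by rewrite Ani (negbTE Ain) (negbTE Anj) Ajn.
Qed.

Lemma switch_at_col X A n i j : n \in X -> i \in X -> j \in X ->
  A n i -> ~~ A i n -> ~~ A n j -> A j n -> row_sum X A j <= row_sum X A i ->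
  exists2 B, same_margins X A B & asym X B n < asym X A n.
Proof.
move=> nX iX jX Ani Ain Anj Ajn le_ji.
have [B AB lt_asym] :=
  switch_at_row (A := transpose A) nX jX iX Ajn Anj Ain Ani le_ji.
exists (transpose B); first exact: (same_margins_transpose AB).
by rewrite asym_transpose -(asym_transpose X A).
Qed.

Lemma symmetrize_at X A n : n \in X -> {in X, row_sum X A =1 col_sum X A} ->
  exists2 B, same_margins X A B & {in X, forall y, B n y = B y n}.
Proof.
move=> nX; have [k] := ubnP (asym X A n); elim: k A => // k IH A lt_asym rcA.
case: (boolP [exists y in X, A n y != A y n]) => /exists_inP; last first.
  move=> sym_n; exists A => [|y yX]; first by split.
  by apply/eqP/negbNE/negP => ?; apply: sym_n; exists y.
move=> [y0 y0X Ay0].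
have [i iX /andP [Ani Ain]] : exists2 i, i \in X & A n i && ~~ A i n.
  case: (boolP (A n y0)) => Any0.
    by exists y0; rewrite // Any0; move: Ay0; rewrite Any0; case: (A y0 n).
  have Ay0n : A y0 n by move: Ay0; rewrite (negbTE Any0); case: (A y0 n).
  apply: (exists_sum_le (p := A^~ n) (q := A n) y0X Ay0n Any0).
  exact: eq_leq (esym (rcA n nX)).
have [j jX /andP [Ajn Anj]] :=
  exists_sum_le (p := A n) (q := A^~ n) iX Ani Ain (eq_leq (rcA n nX)).
have [B AB lt_BA] : exists2 B, same_margins X A B & asym X B n < asym X A n.
  case: (leqP (col_sum X A i) (col_sum X A j)) => le_ij.
    exact: (switch_at_row nX iX jX Ani Ain Anj Ajn le_ij).
  apply: (switch_at_col nX iX jX Ani Ain Anj Ajn).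
  by rewrite (rcA i iX) (rcA j jX) ltnW.
have rcB : {in X, row_sum X B =1 col_sum X B}.
  by case: AB => rAB cAB x xX; rewrite -rAB -cAB rcA.
have [C BC sym_C] := IH B (leq_trans lt_BA lt_asym) rcB.
by exists C => //; apply: same_margins_trans AB BC.
Qed.

Lemma symmetric_realization X A : {in X, row_sum X A =1 col_sum X A} ->
  exists2 S, (forall x y, S x y = S y x) & {in X, row_sum X S =1 row_sum X A}.
Proof.
have [k] := ubnP #|X|; elim: k X A => // k IH X A ltXk rcA.
have [-> | [n nX]] := set_0Vmem X.
  by exists (fun _ _ => false) => // x; rewrite inE.
have [B [rAB cAB] symB] := symmetrize_at nX rcA.
have rcB : {in X :\ n, row_sum (X :\ n) B =1 col_sum (X :\ n) B}.
  move=> x /setD1P [xn xX].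
  have : row_sum X B x = col_sum X B x by rewrite -rAB -cAB rcA.
  by rewrite /row_sum /col_sum !(big_setD1 n nX) /= (symB x xX) => /addnI.
have ltXnk : #|X :\ n| < k by rewrite (cardsD1 n X) nX in ltXk.
have [S' symS' rowS'] := IH (X :\ n) B ltXnk rcB.
pose S x y := if x == n then B n y else if y == n then B n x else S' x y.
exists S.
  move=> x y; rewrite /S.
  by case: (x =P n) => [-> | _]; case: (y =P n) => [yn | _]; rewrite ?yn // symS'.
move=> x xX; rewrite rAB; case: (x =P n) => [-> | xn].
  by apply: eq_bigr => y _; rewrite /S eqxx.
rewrite /row_sum !(big_setD1 n nX) /=; congr (_ + _).
  by rewrite /S (introF eqP xn) eqxx (symB x xX).
have xXn : x \in X :\ n by apply/setD1P; split; first apply/eqP.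
rewrite -[RHS]/(row_sum (X :\ n) B x) -(rowS' x xXn).
by apply: eq_bigr => y /setD1P [yn _]; rewrite /S (introF eqP xn) (negbTE yn).
Qed.

Lemma deg1_row_sum A x : deg1 A x = row_sum [set: T] A x.
Proof.
rewrite /deg1 /row_sum -sum1_card big_mkcond [RHS]big_mkcond /=.
by apply: eq_bigr => y _; rewrite !inE; case: (A x y).
Qed.

Lemma deg2_col_sum A x : deg2 A x = col_sum [set: T] A x.
Proof.
rewrite /deg2 /col_sum -sum1_card big_mkcond [RHS]big_mkcond /=.
by apply: eq_bigr => y _; rewrite !inE; case: (A y x).
Qed.

Lemma symmetric_of_deg1_deg2 A : deg1 A =1 deg2 A ->
  exists2 S, (forall x y, S x y = S y x) & deg1 S =1 deg1 A.
Proof.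
move=> degA; have [|S symS rowS] := @symmetric_realization [set: T] A.
  by move=> x _; rewrite -deg1_row_sum -deg2_col_sum.
by exists S => // x; rewrite !deg1_row_sum rowS ?inE.
Qed.

End Switching.

(* [v0] is only the junk value of [h] outside [s]. *)
Lemma perm_eq_map_inj (U V R : eqType) (f : U -> R) (g : V -> R) (v0 : V) s t :
  uniq s -> uniq t -> perm_eq (map f s) (map g t) ->
  exists h : U -> V,
    [/\ {in s &, injective h}, {in s, forall x, h x \in t}
       & {in s, forall x, g (h x) = f x}].
Proof.
elim: s t => [|x s IH] t /= uniq_s uniq_t fg; first by exists (fun=> v0).
case/andP: uniq_s => s'x uniq_s.
have /mapP [y ty gy] : f x \in map g t by rewrite -(perm_mem fg) mem_head.
have fg' : perm_eq (map f s) (map g (rem y t)).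
  by have := perm_trans fg (perm_map g (perm_to_rem ty)); rewrite /= gy perm_cons.
have [h [h_inj h_in hfg]] := IH _ uniq_s (rem_uniq y uniq_t) fg'.
have rem_y : y \notin rem y t by rewrite mem_rem_uniqF.
have hy z : z \in s -> h z != y.
  by move=> sz; apply: contraNneq rem_y => hzy; rewrite -{1}hzy; exact: h_in.
exists (fun z => if z == x then y else h z); split.
- move=> z w; rewrite !inE.
  case: (z =P x) => [-> _ | /eqP zx /= sz]; case: (w =P x) => [-> _ | /eqP wx /= sw] //.
  + by move=> /esym /eqP; rewrite (negbTE (hy w sw)).
  + by move=> /eqP; rewrite (negbTE (hy z sz)).
  + exact: h_inj.
- move=> z; rewrite inE; case: (z =P x) => [// | _ /= sz].
  exact: mem_rem (h_in z sz).
- by move=> z; rewrite inE; case: (z =P x) => [-> // | _ /= sz]; exact: hfg.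
Qed.

Lemma perm_eq_map_enum_bij (U V : finType) (R : eqType) (f : U -> R) (g : V -> R) :
  perm_eq (map f (enum U)) (map g (enum V)) ->
  exists2 h : U -> V, bijective h & forall x, g (h x) = f x.
Proof.
move=> fg; have cardUV : #|U| = #|V|.
  by rewrite !cardE -(size_map f) -(size_map g) (perm_size fg).
case: (pickP (@predT V)) => [v0 _ | V0].
  have [h [h_inj _ hfg]] := perm_eq_map_inj v0 (enum_uniq U) (enum_uniq V) fg.
  exists h; last by move=> x; rewrite hfg ?mem_enum.
  by apply: inj_card_bij; [move=> x y; apply: h_inj; rewrite mem_enum | rewrite cardUV].
have U0 (u : U) : False.
  by have := card0_eq (etrans cardUV (eq_card0 V0)) u; rewrite !inE.
exists (fun u => False_rect V (U0 u)); last by move=> u; case: (U0 u).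
by apply: inj_card_bij; [move=> u; case: (U0 u) | rewrite cardUV].
Qed.

Theorem theorem1 (P : seq nat) : mirror_bigraphic P <-> bigraphic P P.
Proof.
split=> [[] // | PP]; split=> //.
have [V1 [V2 [E [degE1 degE2]]]] := PP.
have [h h_bij degh] :
    exists2 h : V1 -> V2, bijective h & forall u, deg2 E (h u) = deg1 E u.
  by apply: perm_eq_map_enum_bij; rewrite (perm_trans degE1) // perm_sym.
pose A u v := E u (h v).
have degA : deg1 A =1 deg1 E.
  move=> u; rewrite /deg1 -(on_card_preimset (onW_bij _ h_bij)).
  by apply: eq_card => v; rewrite !inE.
have [|S symS degS] := @symmetric_of_deg1_deg2 V1 A.
  by move=> v; rewrite degA -degh.
have degS2 : deg2 S =1 deg1 E.
  by move=> v; rewrite -degA -degS /deg1 /deg2; apply: eq_card => u; rewrite !inE symS.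
exists V1, V1, S; split.
  by exists id; split; [exists id | move=> u v; exact: symS].
by split; rewrite ?(eq_map degS) ?(eq_map degA) ?(eq_map degS2).
Qed.
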